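(* Let $a\geq 3$ and $m\geq 1$ be integers. There is a bijective correspondence between right $0$-pyramids of pieces of length $a$ and of size $m$, and positive $(am,m)$-strings.
   Context: A string is a finite sequence of $0$'s and $1$'s; an $(n,m)$-string is a string of length $n$ with exactly $m$ $1$'s. An $(am,m)$-string $x_1\dots x_{am}$ is positive if $t_s=\sum_{u=1}^s(a\,x_u-1)\geq 0$ for all $s=1,\dots,am$. A piece is an open interval $]s,s+a[$ with $s\in\mathbb Z$; two pieces are concurrent iff their intervals intersect. A heap is a finite configuration obtained by successively dropping pieces vertically towards the horizontal axis, each coming to rest on the axis or on top of the highest previously placed piece whose interval meets its own; configurations (not dropping orders) are counted. A pyramid is a heap with a unique bottom piece (exactly one piece on the axis); its size is its number of pieces. A right $0$-pyramid is a pyramid whose bottom piece covers $]0,a[$ and is a leftmost piece (no piece covers $]t,t+a[$ with $t<0$). *)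

From HB Require Import structures.
From mathcomp Require Import all_boot all_order all_algebra.
From mathcomp Require Import finmap.
Set Implicit Arguments. Unset Strict Implicit. Unset Printing Implicit Defensive.
Import Order.TTheory GRing.Theory Num.Theory.

(* A piece of length a is the open interval ]s, s+a[ with s : int.
   A placed piece is a pair (s, h) : int * nat, h being its level (0 = on the axis). *)

(* ]s,s+a[ and ]t,t+a[ intersect iff |s - t| < a *)
Definition concurrent (a : nat) (s t : int) : bool := (`|s - t| < a)%N.

Definition drop_level (a : nat) (H : seq (int * nat)) (s : int) : nat :=
  \max_(p <- H | concurrent a p.1 s) p.2.+1.

Fixpoint build_aux (a : nat) (H : seq (int * nat)) (ss : seq int) : seq (int * nat) :=
  match ss with
  | [::] => H
  | s :: ss' => build_aux a (rcons H (s, drop_level a H s)) ss'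
  end.
Definition build (a : nat) (ss : seq int) := build_aux a [::] ss.

Local Open Scope fset_scope.

(* A heap is a configuration (set of placed pieces) obtainable by dropping;
   configurations, not dropping orders, are what is counted. *)
Definition is_heap (a : nat) (H : {fset (int * nat)}) : Prop :=
  exists ss : seq int, uniq (build a ss) /\ H = [fset p | p in build a ss].

Definition is_pyramid (a : nat) (H : {fset (int * nat)}) : Prop :=
  is_heap a H /\ #|` [fset p in H | p.2 == 0%N]| = 1%N.

Definition right0_pyramid (a m : nat) (H : {fset (int * nat)}) : Prop :=
  [/\ is_pyramid a H, ((0:int), 0%N) \in H, (forall p, p \in H -> 0 <= p.1)%R
    & #|` H| = m].

(* t_s = sum_{u=1}^s (a x_u - 1) for the string x (indices shifted to 0-based) *)
Definition tpart (a : nat) (x : seq bool) (s : nat) : int :=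
  (\sum_(u < s) ((a%:Z) * (nth false x u)%:Z - 1))%R.

Definition positive_string (a m : nat) (x : seq bool) : Prop :=
  [/\ size x = (a * m)%N, count id x = m
    & forall s, (1 <= s <= a * m)%N -> (0 <= tpart a x s)%R].

From mathcomp Require Import all_boot all_order all_algebra finmap zify.
From Stdlib Require Import ClassicalEpsilon ProofIrrelevance.
Import Order.TTheory GRing.Theory Num.Theory.
Set Implicit Arguments. Unset Strict Implicit. Unset Printing Implicit Defensive.

(* Every heap has exactly one normal dropping order, one in which each piece
   starts left of the right end of its predecessor (s_{i+1} < s_i + a): the
   leftmost topmost piece can always be dropped last, and two normal orders of
   the same heap end with the same piece, since otherwise each last piece would
   lie at least a to the left of the other.  For a right 0-pyramid the normal
   order starts at 0 and stays nonnegative, and conversely any such sequence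
   gives a pyramid, because every later piece meets an earlier one.  These
   sequences are exactly the heights t_{s-1} in front of the letters 1 of the
   positive (am,m)-strings: t rises by a - 1 at a 1 and falls by 1 at a 0, so
   the string is recovered by inserting s_i + a - 1 - s_{i+1} letters 0 between
   consecutive 1's. *)

Local Open Scope ring_scope.

Section Dropping.
Variable a : nat.
Hypothesis a_gt0 : (0 < a)%N.

Implicit Types (H : seq (int * nat)) (ss : seq int).

Lemma concurrentC s t : concurrent a s t = concurrent a t s.
Proof. by rewrite /concurrent distnC. Qed.

Lemma concurrent_refl s : concurrent a s s.
Proof. by rewrite /concurrent subrr. Qed.

Lemma drop_level_gt H s p :
  p \in H -> concurrent a p.1 s -> (p.2 < drop_level a H s)%N.
Proof. by move=> pH; apply: (leq_bigmax_seq (F := fun p : int * nat => p.2.+1)). Qed.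

Lemma eq_drop_level H1 H2 s : H1 =i H2 -> drop_level a H1 s = drop_level a H2 s.
Proof. by move=> eH; apply: eq_big_idem => //; apply: maxnn. Qed.

Lemma drop_level_nil s : drop_level a [::] s = 0%N.
Proof. by rewrite /drop_level big_nil. Qed.

Lemma drop_level_rcons H p s :
  ~~ concurrent a p.1 s -> drop_level a (rcons H p) s = drop_level a H s.
Proof. by move=> nc; rewrite /drop_level big_rcons (negbTE nc) Monoid.mulm1. Qed.

Lemma build_aux_cat H u v : build_aux a H (u ++ v) = build_aux a (build_aux a H u) v.
Proof. by elim: u H => [|s u IH] H //=. Qed.

Lemma build_rcons ss s :
  build a (rcons ss s) = rcons (build a ss) (s, drop_level a (build a ss) s).
Proof. by rewrite /build -cats1 build_aux_cat. Qed.

Lemma mem_build_aux H ss p : p \in H -> p \in build_aux a H ss.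
Proof. by elim: ss H => [|s ss IH] H //= pH; apply: IH; rewrite mem_rcons inE pH orbT. Qed.

Lemma eq_mem_build_aux H1 H2 ss :
  H1 =i H2 -> build_aux a H1 ss =i build_aux a H2 ss.
Proof.
elim: ss H1 H2 => [|s ss IH] H1 H2 //= eH; apply: IH => p.
by rewrite !mem_rcons !inE (eq_drop_level _ eH) eH.
Qed.

Lemma mem_build_last ss s : (s, drop_level a (build a ss) s) \in build a (rcons ss s).
Proof. by rewrite build_rcons mem_rcons mem_head. Qed.

Lemma mem_build_cat u s v : (s, drop_level a (build a u) s) \in build a (u ++ s :: v).
Proof. by rewrite -cat_rcons /build build_aux_cat mem_build_aux // mem_build_last. Qed.

Lemma map_fst_build ss : map fst (build a ss) = ss.
Proof. by elim/last_ind: ss => [|ss s IH] //; rewrite build_rcons map_rcons IH. Qed.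

Lemma size_build ss : size (build a ss) = size ss.
Proof. by rewrite -{2}(map_fst_build ss) size_map. Qed.

Lemma build_uniq ss : uniq (build a ss).
Proof.
elim/last_ind: ss => [|ss s IH] //; rewrite build_rcons rcons_uniq IH andbT.
by apply/negP => /drop_level_gt /(_ (concurrent_refl s)); rewrite ltnn.
Qed.

Lemma mem_build_split ss q : q \in build a ss ->
  exists u v, ss = u ++ q.1 :: v /\ q.2 = drop_level a (build a u) q.1.
Proof.
elim/last_ind: ss => [|ss s IH] //; rewrite build_rcons mem_rcons inE.
case/orP => [/eqP ->|/IH [u [v [-> e]]]]; first by exists ss, [::]; rewrite cats1.
by exists u, (rcons v s); rewrite rcons_cat rcons_cons.
Qed.

End Dropping.

Lemma rcons_eq_mem (T : eqType) (l1 l2 : seq T) x :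
  x \notin l1 -> x \notin l2 -> rcons l1 x =i rcons l2 x -> l1 =i l2.
Proof.
move=> n1 n2 e y; have := e y; rewrite !mem_rcons !inE.
by case: eqP => [->|] //=; rewrite (negbTE n1) (negbTE n2).
Qed.

Lemma seq_argmin (T : eqType) d (R : orderType d) (f : T -> R) (l : seq T) :
  l != [::] -> exists2 x, x \in l & forall y, y \in l -> (f x <= f y)%O.
Proof.
elim: l => [//|z l IH] _; have [->|/IH [x xl xmin]] := eqVneq l [::].
  by exists z => [|y]; rewrite ?mem_head // inE => /eqP ->.
have [zx|xz] := leP (f z) (f x).
  exists z => [|y]; first exact: mem_head.
  by rewrite inE => /orP [/eqP -> //|/xmin]; apply: le_trans.
exists x => [|y]; first by rewrite inE xl orbT.
by rewrite inE => /orP [/eqP ->|/xmin //]; apply: ltW.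
Qed.

Section NormalOrder.
Variable a : nat.
Hypothesis a_gt0 : (0 < a)%N.

Implicit Types (H : seq (int * nat)) (ss : seq int).

Definition normal_step (s t : int) : bool := t < s + a%:Z.

Definition topmost H (q : int * nat) : bool :=
  all (fun r => concurrent a q.1 r.1 ==> (r.2 <= q.2)%N) H.

Lemma topmostP H q :
  reflect (forall r, r \in H -> concurrent a q.1 r.1 -> (r.2 <= q.2)%N) (topmost H q).
Proof.
apply: (iffP allP) => top r rH; first exact/implyP/top.
by apply/implyP; apply: top.
Qed.

Lemma eq_topmost H1 H2 q : H1 =i H2 -> topmost H1 q = topmost H2 q.
Proof. by move=> e; apply: (eq_all_r e). Qed.

Lemma topmost_rcons H p q :
  topmost H q -> ~~ concurrent a q.1 p.1 -> topmost (rcons H p) q.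
Proof. by rewrite /topmost all_rcons => -> nc; rewrite (negbTE nc). Qed.

Lemma topmost_last ss s :
  topmost (build a (rcons ss s)) (s, drop_level a (build a ss) s).
Proof.
apply/topmostP => r; rewrite build_rcons mem_rcons inE => /orP [/eqP -> //|rH] c.
by apply/ltnW/drop_level_gt; rewrite // concurrentC.
Qed.

(* A piece x dropped after a topmost piece s cannot be concurrent with it
   (it would land above it), and normality keeps it below s + a. *)
Lemma topmost_after_le u s v :
  path normal_step s v ->
  topmost (build a (u ++ s :: v)) (s, drop_level a (build a u) s) ->
  forall x, x \in v -> x <= s - a%:Z.
Proof.
elim/last_ind: v => [//|v x IH]; rewrite -rcons_cons -rcons_cat rcons_path.
move=> /andP [pv step] top.
have {}IH : forall y, y \in v -> y <= s - a%:Z.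
  apply: IH pv _; apply/topmostP => r rH; apply: (topmostP _ _ top).
  by rewrite build_rcons mem_rcons inE rH orbT.
have ncx : ~~ concurrent a s x.
  apply/negP => c; have := topmostP _ _ top _ (mem_build_last a _ _) c.
  by rewrite leqNgt (drop_level_gt (mem_build_cat a u s v) c).
have last_le : last s v <= s.
  have := mem_last s v; rewrite inE => /orP [/eqP -> //|/IH /le_trans]; apply.
  by rewrite gerBl.
move=> y; rewrite mem_rcons inE => /orP [/eqP ->|/IH //].
by move: ncx step; rewrite /concurrent /normal_step; lia.
Qed.

Lemma topmost_right_of_last p s q :
  sorted normal_step (rcons p s) -> q \in build a (rcons p s) ->
  topmost (build a (rcons p s)) q -> q != (s, drop_level a (build a p) s) ->
  s <= q.1 - a%:Z.
Proof.
move=> srt qH top nq; have [u [v [e e2]]] := mem_build_split qH.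
have qE : q = (q.1, drop_level a (build a u) q.1) by rewrite -e2 -surjective_pairing.
case/lastP: v e => [|v x] e.
  by move: e nq; rewrite cats1 => /rcons_inj [-> ->]; rewrite {1}qE eqxx.
move: (e); rewrite -rcons_cons -rcons_cat => /rcons_inj [_ ->].
rewrite e sorted_cat_cons in srt top; case/andP: srt => _ path_q.
by apply: (topmost_after_le (u := u) path_q); rewrite -?qE // mem_rcons mem_head.
Qed.

Lemma normal_build_inj ss1 ss2 :
  sorted normal_step ss1 -> sorted normal_step ss2 ->
  build a ss1 =i build a ss2 -> ss1 = ss2.
Proof.
elim/last_ind: ss1 ss2 => [|p1 s1 IH] ss2; case/lastP: ss2 => [|p2 s2] //.
- by move=> _ _ /(_ (s2, drop_level a (build a p2) s2)); rewrite mem_build_last.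
- by move=> _ _ /(_ (s1, drop_level a (build a p1) s1)); rewrite mem_build_last.
move=> srt1 srt2 e.
pose q1 := (s1, drop_level a (build a p1) s1).
pose q2 := (s2, drop_level a (build a p2) s2).
have top1 : topmost (build a (rcons p2 s2)) q1 by rewrite -(eq_topmost _ e) topmost_last.
have top2 : topmost (build a (rcons p1 s1)) q2 by rewrite (eq_topmost _ e) topmost_last.
have q1H : q1 \in build a (rcons p2 s2) by rewrite -e mem_build_last.
have q2H : q2 \in build a (rcons p1 s1) by rewrite e mem_build_last.
have [q12|nq12] := eqVneq q1 q2; last first.
  have nq21 : q2 != q1 by rewrite eq_sym.
  move: (topmost_right_of_last srt2 q1H top1 nq12).
  by move: (topmost_right_of_last srt1 q2H top2 nq21); rewrite /q1 /q2 /=; lia.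
case: q12 => s12 dl12; rewrite -s12 in srt2 e dl12 *; congr rcons; apply: IH.
- by move: srt1; rewrite -cats1 => /cat_sorted2 [].
- by move: srt2; rewrite -cats1 => /cat_sorted2 [].
have := build_uniq a_gt0 (rcons p1 s1); have := build_uniq a_gt0 (rcons p2 s1).
move: e; rewrite !build_rcons !rcons_uniq -dl12 => e /andP [n2 _] /andP [n1 _].
exact: rcons_eq_mem n1 n2 e.
Qed.

Lemma build_aux_move_last H v x :
  (forall y, y \in v -> ~~ concurrent a x y) ->
  build_aux a H (x :: v) =i build_aux a H (rcons v x).
Proof.
elim: v H => [|y v IH] H nc //=.
have ncy : ~~ concurrent a x y by apply: nc; rewrite mem_head.
move=> z; rewrite -(IH (rcons H (y, drop_level a H y))) => [|t tv]; last first.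
  by apply: nc; rewrite inE tv orbT.
move: z; apply: eq_mem_build_aux => z /=.
rewrite (@drop_level_rcons a H (x, _) y) // (@drop_level_rcons a H (y, _) x);
  last by rewrite concurrentC.
by rewrite !(mem_rcons, in_cons) orbCA.
Qed.

Lemma topmost_not_concurrent_after u s v y :
  topmost (build a (u ++ s :: v)) (s, drop_level a (build a u) s) ->
  y \in v -> ~~ concurrent a s y.
Proof.
move=> + yv; case/splitPr: yv => v1 v2 top; apply/negP => c.
rewrite -cat_cons catA in top.
have := topmostP _ _ top _ (mem_build_cat a (u ++ s :: v1) y v2) c.
by rewrite leqNgt (drop_level_gt (mem_build_cat a u s v1) c).
Qed.

Lemma topmost_move_last ss q :
  q \in build a ss -> topmost (build a ss) q ->
  exists u v, ss = u ++ q.1 :: v /\ build a ss =i build a (rcons (u ++ v) q.1).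
Proof.
move=> qH top; have [u [v [ssE e2]]] := mem_build_split qH.
have top' : topmost (build a (u ++ q.1 :: v)) (q.1, drop_level a (build a u) q.1).
  by rewrite -ssE -e2 -surjective_pairing.
exists u, v; split => //.
rewrite ssE /build build_aux_cat -cats1 -catA cats1 build_aux_cat.
by apply: build_aux_move_last => y; apply: topmost_not_concurrent_after top'.
Qed.

(* Drop the leftmost topmost piece last: the last piece of a normal order of the
   remaining pieces lies left of it, otherwise it would be a topmost piece further left. *)
Lemma normal_order_exists ss0 :
  exists2 ss, sorted normal_step ss & build a ss =i build a ss0.
Proof.
move: {2}(size ss0) (erefl (size ss0)) => n.
elim: n ss0 => [|n IH] ss0 sz; first by exists [::]; rewrite // (size0nil sz).
have [q] : exists2 q, q \in filter (topmost (build a ss0)) (build a ss0) &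
    forall r, r \in filter (topmost (build a ss0)) (build a ss0) -> (q.1 <= r.1)%O.
  apply: seq_argmin; rewrite -has_filter.
  case/lastP: ss0 sz => [//|p s] _; apply/hasP.
  by exists (s, drop_level a (build a p) s); rewrite ?mem_build_last ?topmost_last.
rewrite mem_filter => /andP [qtop qH] qmin.
have [u [v [ss0E eH]]] := topmost_move_last qH qtop.
have [ss' srt' e'] : exists2 ss', sorted normal_step ss' & build a ss' =i build a (u ++ v).
  by apply: IH; move: sz; rewrite ss0E !size_cat /=; lia.
have eB : build a (rcons ss' q.1) =i build a ss0.
  by move=> z; rewrite eH !build_rcons !mem_rcons !inE (eq_drop_level _ _ e') e'.
exists (rcons ss' q.1) => //.
case/lastP: ss' srt' {e'} eB => [//|p' s'] srt' eB.
rewrite -cats1 cat_rcons sorted_cat_cons srt' /= andbT /normal_step ltNge.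
apply/negP => right_of_s'.
pose q' := (s', drop_level a (build a p') s').
have top' : topmost (build a ss0) q'.
  rewrite -(eq_topmost _ eB) build_rcons; apply: topmost_rcons; first exact: topmost_last.
  by rewrite /concurrent /=; lia.
have q'H : q' \in build a ss0 by rewrite -eB build_rcons mem_rcons inE mem_build_last orbT.
by have := qmin q'; rewrite mem_filter top' q'H => /(_ isT) /=; lia.
Qed.

End NormalOrder.

Section NormalLevels.
Variable a : nat.

Lemma normal_cover (w : seq int) (c : int) :
  path (normal_step a) 0 w -> all (fun s => 0 <= s) w ->
  0 <= c -> c < last 0 w + a%:Z -> has (fun y => concurrent a y c) (0 :: w).
Proof.
elim/last_ind: w c => [|w z IH] c; first by rewrite /= /concurrent orbF; lia.
rewrite rcons_path all_rcons last_rcons -rcons_cons has_rcons.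
move=> /andP [pw step] /andP [z0 nw] c0 cz.
have [zc|cz'] := lerP z c; first by rewrite /= /concurrent; apply/orP; left; lia.
by rewrite IH ?orbT //; apply: lt_trans cz' step.
Qed.

(* Every later piece meets an earlier one, hence lands above the axis. *)
Lemma build_normal_level w p :
  path (normal_step a) 0 w -> all (fun s => 0 <= s) w ->
  p \in build a (0 :: w) -> p = (0, 0%N) \/ (0 < p.2)%N.
Proof.
move=> pw nw /mem_build_split [[|z u] [v [e e2]]].
  by left; case: p e e2 => p1 p2 /= [<- _] ->; rewrite drop_level_nil.
right; case: e e2 => <- ew e2; move: pw nw; rewrite ew cat_path all_cat /=.
move=> /and3P [pu step _] /and3P [nu p0 _].
have /hasP [y yu cy] := normal_cover pu nu p0 step.
have /mapP [r rH yr] : y \in map fst (build a (0 :: u)) by rewrite map_fst_build.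
by rewrite e2 (leq_ltn_trans (leq0n r.2)) // (drop_level_gt rH) // -yr.
Qed.

End NormalLevels.

Section Strings.
Variable a : nat.

Implicit Types (t : int) (x : seq bool) (ss : seq int).

Definition tstep (b : bool) : int := a%:Z * b%:Z - 1.

Lemma tstep_true : tstep true = a%:Z - 1. Proof. by rewrite /tstep mulr1. Qed.
Lemma tstep_false : tstep false = - 1. Proof. by rewrite /tstep mulr0 add0r. Qed.

Lemma tpart0 x : tpart a x 0 = 0.
Proof. by rewrite /tpart big_ord0. Qed.

Lemma tpart_cons b x s : tpart a (b :: x) s.+1 = tstep b + tpart a x s.
Proof. by rewrite /tpart big_ord_recl. Qed.

(* The heights t + t_{s-1} just before the letters 1 of x. *)
Fixpoint one_heights t x : seq int :=
  if x is b :: x' then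
    if b then t :: one_heights (t + tstep b) x' else one_heights (t + tstep b) x'
  else [::].

Fixpoint stays_nonneg t x : bool :=
  if x is b :: x' then (0 <= t + tstep b) && stays_nonneg (t + tstep b) x' else true.

Lemma stays_nonnegP t x :
  reflect (forall s, (1 <= s <= size x)%N -> 0 <= t + tpart a x s) (stays_nonneg t x).
Proof.
elim: x t => [|b x IH] t /=; first by apply: ReflectT => -[].
apply: (iffP andP) => [[h1 /IH h2] [|[|s]] //= hs|H].
- by rewrite tpart_cons tpart0 addr0.
- by rewrite tpart_cons addrA; apply: h2.
split; first by have := H 1%N isT; rewrite tpart_cons tpart0 addr0.
by apply/IH => s /andP [_ hs]; have := H s.+1; rewrite tpart_cons addrA ltnS; apply.
Qed.

Lemma positive_stringE m x : positive_string a m x <->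
  [/\ size x = (a * m)%N, count id x = m & stays_nonneg 0 x].
Proof.
split => [[sz ct pos]|[sz ct /stays_nonnegP pos]]; split => //.
  by apply/stays_nonnegP => s hs; rewrite add0r; apply: pos; rewrite -sz.
by move=> s hs; rewrite -(add0r (tpart a x s)); apply: pos; rewrite sz.
Qed.

Lemma size_one_heights t x : size (one_heights t x) = count id x.
Proof. by elim: x t => [|[] x IH] t //=; rewrite IH. Qed.

Lemma one_heights_head t x s l : one_heights t x = s :: l -> s <= t.
Proof.
elim: x t => [|[] x IH] t //=; first by case=> ->.
by move/IH; rewrite tstep_false => /le_trans; apply; rewrite gerBl.
Qed.

Lemma one_heights_inj t x y :
  size x = size y -> one_heights t x = one_heights t y -> x = y.
Proof.
elim: x t y => [|b x IH] t [|c y] //= [sz].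
case: b; case: c => e; last by rewrite (IH _ _ sz e).
- by case: e => e; rewrite (IH _ _ sz e).
- by have := one_heights_head (esym e); rewrite tstep_false; lia.
- by have := one_heights_head e; rewrite tstep_false; lia.
Qed.

Lemma one_heights_nonneg t x :
  0 <= t -> stays_nonneg t x -> all (fun s => 0 <= s) (one_heights t x).
Proof.
elim: x t => [|[] x IH] t //= t0 /andP [h1 h2] /=; last exact: IH.
by rewrite t0 IH.
Qed.

Lemma normal_path_le (u u' : int) ss :
  u <= u' -> path (normal_step a) u ss -> path (normal_step a) u' ss.
Proof.
case: ss => [|z ss] //= uu' /andP [uz ->]; rewrite andbT.
by move: uz; rewrite /normal_step; lia.
Qed.

Lemma one_heights_path t x : path (normal_step a) (t - a%:Z + 1) (one_heights t x).
Proof.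
elim: x t => [|[] x IH] t //=.
  rewrite {1}/normal_step; apply/andP; split; first by lia.
  by apply: normal_path_le (IH _); rewrite tstep_true; lia.
by apply: normal_path_le (IH _); rewrite tstep_false; lia.
Qed.

Lemma one_heights_nseq t n x :
  one_heights t (nseq n false ++ x) = one_heights (t - n%:Z) x.
Proof.
elim: n t => [|n IH] t /=; first by rewrite subr0.
by rewrite IH tstep_false; congr one_heights; lia.
Qed.

Lemma stays_nonneg_nseq t n x : 0 <= t - n%:Z ->
  stays_nonneg t (nseq n false ++ x) = stays_nonneg (t - n%:Z) x.
Proof.
elim: n t => [|n IH] t /= h; first by rewrite subr0.
rewrite tstep_false IH; last by lia.
by rewrite (_ : t - 1 - n%:Z = t - n.+1%:Z) 1?(_ : 0 <= t - 1 = true) //; lia.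
Qed.

(* Inverse of one_heights: before the height s of the next letter 1,
   insert t - s letters 0 to come down from the current height t. *)
Fixpoint string_of_heights t ss : seq bool :=
  if ss is s :: ss' then
    nseq `|t - s|%N false ++ true :: string_of_heights (s + a%:Z - 1) ss'
  else nseq `|t|%N false.

Definition heights_from t ss :=
  [&& 0 <= t, path (normal_step a) (t - a%:Z + 1) ss & all (fun s => 0 <= s) ss].

Hypothesis a_gt0 : (0 < a)%N.

Lemma heights_from_cons t s ss : heights_from t (s :: ss) ->
  [/\ heights_from (s + a%:Z - 1) ss, s <= t & 0 <= s].
Proof.
rewrite /heights_from /= => /and4P [t0 /andP [st pss] s0 nss].
rewrite (_ : s + a%:Z - 1 - a%:Z + 1 = s); last by lia.
split => //; last by move: st; rewrite /normal_step; lia.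
by rewrite pss nss andbT; lia.
Qed.

Lemma one_heightsK t ss : heights_from t ss -> one_heights t (string_of_heights t ss) = ss.
Proof.
elim: ss t => [|s ss IH] t /=; first by rewrite -(cats0 (nseq _ _)) one_heights_nseq.
case/heights_from_cons => hss st s0.
rewrite one_heights_nseq (_ : t - `|t - s|%N%:Z = s); last by lia.
by rewrite /= tstep_true addrA IH.
Qed.

Lemma string_of_heights_nonneg t ss :
  heights_from t ss -> stays_nonneg t (string_of_heights t ss).
Proof.
elim: ss t => [|s ss IH] t /=.
  by case/and3P => t0 _ _; rewrite -(cats0 (nseq _ _)) stays_nonneg_nseq //; lia.
case/heights_from_cons => hss st s0.
rewrite stays_nonneg_nseq (_ : t - `|t - s|%N%:Z = s); try lia.
by rewrite /= tstep_true addrA IH // andbT; lia.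
Qed.

Lemma count_string_of_heights t ss : count id (string_of_heights t ss) = size ss.
Proof.
elim: ss t => [|s ss IH] t /=; first by rewrite count_nseq mul0n.
by rewrite count_cat count_nseq mul0n /= IH.
Qed.

Lemma size_string_of_heights t ss : heights_from t ss ->
  (size (string_of_heights t ss))%:Z = t + a%:Z * (size ss)%:Z.
Proof.
elim: ss t => [|s ss IH] t /=; first by case/and3P => t0 _ _; rewrite size_nseq; lia.
case/heights_from_cons => hss st s0.
rewrite size_cat size_nseq /= -addSnnS PoszD IH //; lia.
Qed.

End Strings.

Local Open Scope fset_scope.
Local Open Scope ring_scope.

Lemma mem_fset_seq (T : choiceType) (L : seq T) x : (x \in [fset p | p in L]) = (x \in L).
Proof. by rewrite inE. Qed.

Lemma card_fset_seq (T : choiceType) (L : seq T) :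
  uniq L -> #|` [fset p | p in L]| = size L.
Proof. by move=> uL; rewrite card_in_imfset //= undup_id. Qed.

Lemma inj_surj_exists_bijective (A B : Type) (g : B -> A) :
  injective g -> (forall y, exists x, g x = y) -> exists f : A -> B, bijective f.
Proof.
move=> g_inj g_surj.
pose f y := proj1_sig (constructive_indefinite_description _ (g_surj y)).
have gK : cancel f g.
  by move=> y; exact: proj2_sig (constructive_indefinite_description _ (g_surj y)).
by exists f; apply: (Bijective (g := g)) => // x; apply: g_inj; rewrite gK.
Qed.

Section Bijection.
Variables a m : nat.
Hypotheses (a_gt0 : (0 < a)%N) (m_gt0 : (0 < m)%N).

Definition right0_normal (w : seq int) :=
  [/\ path (normal_step a) 0 w, all (fun s => 0 <= s) w & size w = m.-1].

Lemma bottom_mem_build (s : int) w : (s, 0%N) \in build a (s :: w).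
Proof. by have := mem_build_cat a [::] s w; rewrite drop_level_nil. Qed.

Lemma right0_normal_pyramid w :
  right0_normal w -> right0_pyramid a m [fset p | p in build a (0 :: w)].
Proof.
case=> pw nw sw; split; rewrite ?mem_fset_seq ?bottom_mem_build //.
- split; first by exists (0 :: w); rewrite build_uniq.
  apply/eqP/cardfs1P; exists (0, 0%N); apply/fsetP => p; rewrite !inE /=.
  apply/andP/eqP => [[pH /eqP p0]|->]; last by rewrite bottom_mem_build.
  by case: (build_normal_level pw nw pH) => //; rewrite p0.
- move=> p; rewrite mem_fset_seq => /(map_f fst); rewrite map_fst_build inE.
  by case/orP => [/eqP -> //|/(allP nw)].
- by rewrite card_fset_seq ?build_uniq // size_build /= sw prednK.
Qed.

Lemma right0_pyramid_normal H : right0_pyramid a m H ->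
  exists2 w, right0_normal w & H = [fset p | p in build a (0 :: w)].
Proof.
case=> [[[ss0 [_ ->]] bottom1] bottom0 nonneg sizeH].
have [ss srt e] := normal_order_exists a_gt0 ss0.
have eH : [fset p | p in build a ss0] = [fset p | p in build a ss].
  by apply/fsetP => p; rewrite !mem_fset_seq e.
rewrite eH in bottom1 bottom0 nonneg sizeH *.
move: sizeH; rewrite card_fset_seq ?build_uniq // size_build.
case: ss srt e eH bottom1 bottom0 nonneg => [|s w] srt _ _ bottom1 bottom0 nonneg sw.
  by move: m_gt0; rewrite -sw.
have s0 : s = 0.
  have /eqP/cardfs1P [q /fsetP bottomE] := bottom1.
  have := bottomE (s, 0%N); have := bottomE (0, 0%N).
  by rewrite !inE bottom_mem_build -mem_fset_seq bottom0 /= => /esym/eqP <- /esym/eqP [->].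
subst s; exists w => //; split => //; last by rewrite -sw.
apply/allP => s sw'.
have /mapP [p pH ->] : s \in map fst (build a (0 :: w)) by rewrite map_fst_build inE sw' orbT.
by apply: nonneg; rewrite mem_fset_seq.
Qed.

Lemma positive_string_right0_pyramid x : positive_string a m x ->
  right0_pyramid a m [fset p | p in build a (one_heights a 0 x)].
Proof.
case/positive_stringE => sz ct nonneg.
case: x sz ct nonneg => [|[] x] sz ct nonneg.
- by move: (muln_gt0 a m); rewrite -sz a_gt0 m_gt0.
- rewrite /= add0r tstep_true; apply: right0_normal_pyramid; split.
  + have := one_heights_path a (a%:Z - 1) x.
    by rewrite (_ : a%:Z - 1 - a%:Z + 1 = 0) //; lia.
  + have := one_heights_nonneg (lexx 0) nonneg.
    by rewrite /= add0r tstep_true.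
  + by rewrite size_one_heights -ct.
- by move: nonneg; rewrite /= tstep_false.
Qed.

Lemma right0_normal_heights_from w : right0_normal w -> heights_from a 0 (0 :: w).
Proof.
case=> pw nw _; rewrite /heights_from /= pw nw !andbT /normal_step.
lia.
Qed.

Lemma right0_normal_positive_string w :
  right0_normal w -> positive_string a m (string_of_heights a 0 (0 :: w)).
Proof.
move=> nw; have hw := right0_normal_heights_from nw; case: nw => _ _ sw.
apply/positive_stringE; split.
- by apply/eqP; rewrite -eqz_nat (size_string_of_heights a_gt0 hw) /= sw prednK.
- by rewrite count_string_of_heights /= sw prednK.
- exact: string_of_heights_nonneg.
Qed.

Definition pyramid_of_string (x : {x | positive_string a m x}) :
    {H | right0_pyramid a m H} :=
  exist _ _ (positive_string_right0_pyramid (proj2_sig x)).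

Lemma pyramid_of_string_inj : injective pyramid_of_string.
Proof.
move=> [x px] [y py] /(congr1 (@proj1_sig _ _)) /= e.
have sorted_heights z : sorted (normal_step a) (one_heights a 0 z).
  exact: path_sorted (one_heights_path a 0 z).
have {}e : one_heights a 0 x = one_heights a 0 y.
  apply: (normal_build_inj a_gt0 (sorted_heights x) (sorted_heights y)) => p.
  by move/fsetP/(_ p): e; rewrite !mem_fset_seq.
have sxy : size x = size y by case: px => -> _ _; case: py => -> _ _.
move: py; rewrite -(one_heights_inj sxy e) => py.
by congr exist; apply: proof_irrelevance.
Qed.

Lemma pyramid_of_string_surj H : exists x, pyramid_of_string x = H.
Proof.
case: H => H pH; have [w nw eH] := right0_pyramid_normal pH.
exists (exist _ _ (right0_normal_positive_string nw)).
apply: eq_sig_hprop => [? ? ?|]; first exact: proof_irrelevance.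
by cbn [proj1_sig pyramid_of_string]; rewrite one_heightsK ?right0_normal_heights_from // eH.
Qed.

End Bijection.

Theorem lemma5 (a m : nat) (ha : (3 <= a)%N) (hm : (1 <= m)%N) :
  exists f : {H : {fset (int * nat)} | right0_pyramid a m H} ->
             {x : seq bool | positive_string a m x},
    bijective f.
Proof.
have a_gt0 : (0 < a)%N by apply: leq_trans ha.
exact: inj_surj_exists_bijective (@pyramid_of_string_inj a m a_gt0 hm)
                                 (@pyramid_of_string_surj a m a_gt0 hm).
Qed.
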